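(* Assume the standing setup below with $0<T_2<T_1<1$. Then for every $q\in[0,1]$ with $\psi(q)\in(0,1)$, the function $\psi$ is differentiable at $q$ and $\frac{d\psi}{dq}(q)>0$; that is, $\psi$ is strictly increasing in $q$ wherever $\psi\in(0,1)$.
   Context: Standing setup. $P$ is a probability distribution on $\{0,1,\dots,k_{\max}\}$ (a degree distribution with finite maximum degree $k_{\max}$) with mean $\langle k\rangle=\sum_k kP(k)>0$. The excess degree distribution is $Q(k)=(k+1)P(k+1)/\langle k\rangle$ for $k\ge 0$. Fix $T_1,T_2\in(0,1)$. For $q\in[0,1]$ and integers $k_1,k_2\ge 0$ set $$P_q(k_1,k_2)=\binom{k_1+k_2}{k_2}q^{k_2}(1-q)^{k_1}P(k_1+k_2),\qquad Q_q(k_1,k_2)=\binom{k_1+k_2}{k_2}q^{k_2}(1-q)^{k_1}Q(k_1+k_2)$$ (with $0^0=1$). For $u\in[0,1]$ define $$F_q(u)=\sum_{k_1,k_2\ge0}\big(1+(u-1)T_1\big)^{k_1}\big(1+(u-1)T_2\big)^{k_2}Q_q(k_1,k_2),\qquad G_q(u)=\sum_{k_1,k_2\ge0}\big(1+(u-1)T_1\big)^{k_1}\big(1+(u-1)T_2\big)^{k_2}P_q(k_1,k_2).$$ Let $u^*(q)$ be the smallest solution in $[0,1]$ of the fixed point equation $u=F_q(u)$ (note $u=1$ is always a solution), and set $\psi(q)=G_q(u^*(q))$ (the probability that a random node is not in the rumor outbreak; $1-\psi$ is the outbreak size). *)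

From Stdlib Require Import Reals Lra ClassicalEpsilon.
Open Scope R_scope.

(* Degree distribution P : nat -> R, supported on {0..kmax}. *)
Definition mean_deg (P : nat -> R) (kmax : nat) : R :=
  sum_f_R0 (fun k => INR k * P k) kmax.

Definition Qex (P : nat -> R) (kmax : nat) (k : nat) : R :=
  INR (S k) * P (S k) / mean_deg P kmax.

Definition split_dist (D : nat -> R) (q : R) (k1 k2 : nat) : R :=
  Binomial.C (k1 + k2) k2 * q ^ k2 * (1 - q) ^ k1 * D (k1 + k2)%nat.

(* Generating sum over k1,k2 >= 0; all terms with k1 + k2 > kmax vanish
   (P and Q vanish there), so summing k1,k2 over 0..kmax is the full sum. *)
Definition gen_sum (D : nat -> R) (kmax : nat) (T1 T2 q u : R) : R :=
  sum_f_R0 (fun k1 =>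
    sum_f_R0 (fun k2 =>
      (1 + (u - 1) * T1) ^ k1 * (1 + (u - 1) * T2) ^ k2 * split_dist D q k1 k2)
    kmax) kmax.

Definition Fq (P : nat -> R) (kmax : nat) (T1 T2 q u : R) : R :=
  gen_sum (Qex P kmax) kmax T1 T2 q u.

Definition Gq (P : nat -> R) (kmax : nat) (T1 T2 q u : R) : R :=
  gen_sum P kmax T1 T2 q u.

Definition smallest_fp (P : nat -> R) (kmax : nat) (T1 T2 q u : R) : Prop :=
  0 <= u <= 1 /\ u = Fq P kmax T1 T2 q u /\
  forall v, 0 <= v <= 1 -> v = Fq P kmax T1 T2 q v -> u <= v.

(* u*(q): chosen by Hilbert epsilon (the smallest fixed point exists). *)
Definition ustar (P : nat -> R) (kmax : nat) (T1 T2 q : R) : R :=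
  epsilon (inhabits 0) (fun u => smallest_fp P kmax T1 T2 q u).

Definition psi (P : nat -> R) (kmax : nat) (T1 T2 q : R) : R :=
  Gq P kmax T1 T2 q (ustar P kmax T1 T2 q).

(* Derivative of f at q, relative to the domain [0,1] (one-sided at the
   endpoints, ordinary two-sided derivative in the interior). *)
Definition has_deriv_on01 (f : R -> R) (q l : R) : Prop :=
  forall eps, 0 < eps -> exists delta, 0 < delta /\
    forall h, h <> 0 -> Rabs h < delta -> 0 <= q + h <= 1 ->
      Rabs ((f (q + h) - f q) / h - l) < eps.

(* With T(q) = (1-q) T1 + q T2, the split sums collapse to F_q(u) = f(x) and
   G_q(u) = g(x) at x = 1 - T(q) (1 - u), where f and g generate Q and P.  So
   xstar(q), the point belonging to ustar(q), solves x = 1 - T(q) (1 - f x), and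
   psi(q) = g(xstar(q)).  If psi(q) < 1 then ustar(q) < 1, and convexity of f makes this fixed
   point transversal: T(q) f'(xstar) < 1.  Hence ustar is continuous there, and the
   implicit-function computation gives xstar'(q) = (T1 - T2) (1 - ustar) / (1 - T(q) f'(xstar)) > 0,
   so psi'(q) = g'(xstar) xstar'(q) > 0. *)

From Stdlib Require Import Reals Lra Lia ClassicalEpsilon Classical FunctionalExtensionality.
Open Scope R_scope.

Lemma sum_f_R0_trunc (f : nat -> R) (m K : nat) :
  (m <= K)%nat -> (forall j, (m < j <= K)%nat -> f j = 0) ->
  sum_f_R0 f K = sum_f_R0 f m.
Proof.
  induction K as [|K IH]; intros Hm Hz.
  - replace m with 0%nat by lia. reflexivity.
  - destruct (Nat.eq_dec m (S K)) as [->|]; [reflexivity|].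
    rewrite tech5, Hz, IH by (try lia; intros; apply Hz; lia). ring.
Qed.

Lemma sum_f_R0_antidiagonal (h : nat -> nat -> R) (K : nat) :
  sum_f_R0 (fun k1 => sum_f_R0 (fun k2 => h k1 k2) (K - k1)) K =
  sum_f_R0 (fun n => sum_f_R0 (fun k1 => h k1 (n - k1)%nat) n) K.
Proof.
  induction K as [|K IH]; [reflexivity|].
  rewrite !tech5, <- IH, Nat.sub_diag.
  rewrite (sum_eq (fun k1 => sum_f_R0 (fun k2 => h k1 k2) (S K - k1))
             (fun k1 => sum_f_R0 (fun k2 => h k1 k2) (K - k1) + h k1 (S K - k1)%nat)).
  - rewrite sum_plus. simpl. ring.
  - intros i Hi. replace (S K - i)%nat with (S (K - i)) by lia. apply tech5.
Qed.

Lemma sum_f_R0_pos_of_term (f : nat -> R) (K j : nat) :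
  (forall k, 0 <= f k) -> (j <= K)%nat -> 0 < f j -> 0 < sum_f_R0 f K.
Proof.
  intros Hf; induction K as [|K IH]; intros Hj Hpos.
  - replace j with 0%nat in Hpos by lia. exact Hpos.
  - rewrite tech5. pose proof (Hf (S K)). pose proof (cond_pos_sum f K Hf).
    destruct (Nat.eq_dec j (S K)) as [->|]; [lra|].
    specialize (IH ltac:(lia) Hpos). lra.
Qed.

Definition gf (c : nat -> R) (K : nat) (y : R) : R :=
  sum_f_R0 (fun k => c k * y ^ k) K.

Definition gf_der (c : nat -> R) (K : nat) (y : R) : R :=
  sum_f_R0 (fun k => c k * (INR k * y ^ pred k)) K.

Definition pow_remainder (k : nat) (y z : R) : R :=
  y ^ k - z ^ k - INR k * z ^ pred k * (y - z).

Lemma pow_unit_interval (z : R) (n : nat) : 0 <= z <= 1 -> 0 <= z ^ n <= 1.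
Proof. intros Hz; split; [apply pow_le; lra|]. rewrite <- (pow1 n). apply pow_incr; lra. Qed.

Lemma pow_sub_abs_le (k : nat) (y z : R) : 0 <= y <= 1 -> 0 <= z <= 1 ->
  Rabs (y ^ k - z ^ k) <= INR k * Rabs (y - z).
Proof.
  intros Hy Hz; induction k as [|k IH].
  - simpl. rewrite Rminus_diag, Rabs_R0. lra.
  - replace (y ^ S k - z ^ S k) with (y * (y ^ k - z ^ k) + z ^ k * (y - z)) by (simpl; ring).
    rewrite S_INR. eapply Rle_trans; [apply Rabs_triang|]. rewrite !Rabs_mult.
    pose proof (pow_unit_interval z k Hz).
    rewrite (Rabs_right y), (Rabs_right (z ^ k)) by lra.
    pose proof (Rabs_pos (y ^ k - z ^ k)). pose proof (Rabs_pos (y - z)). nra.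
Qed.

Lemma pow_remainder_S (k : nat) (y z : R) :
  pow_remainder (S k) y z = y * pow_remainder k y z + INR k * z ^ pred k * (y - z) ^ 2.
Proof.
  unfold pow_remainder. destruct k as [|k].
  - simpl. ring.
  - cbn [pred]. rewrite !S_INR. simpl. ring.
Qed.

Lemma pow_remainder_nonneg (k : nat) (y z : R) : 0 <= y -> 0 <= z -> 0 <= pow_remainder k y z.
Proof.
  intros Hy Hz; induction k as [|k IH].
  - unfold pow_remainder; simpl; lra.
  - rewrite pow_remainder_S. pose proof (pos_INR k). pose proof (pow_le z (pred k) Hz).
    pose proof (pow2_ge_0 (y - z)).
    apply Rplus_le_le_0_compat; [nra|]. apply Rmult_le_pos; [nra|lra].
Qed.

Lemma pow_remainder_le (k : nat) (y z : R) : 0 <= y <= 1 -> 0 <= z <= 1 ->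
  pow_remainder k y z <= INR k ^ 2 * (y - z) ^ 2.
Proof.
  intros Hy Hz; induction k as [|k IH].
  - unfold pow_remainder; simpl. lra.
  - rewrite pow_remainder_S, S_INR.
    pose proof (pow_unit_interval z (pred k) Hz). pose proof (pos_INR k).
    pose proof (pow2_ge_0 (y - z)). pose proof (pow_remainder_nonneg k y z ltac:(lra) ltac:(lra)).
    assert (INR k * z ^ pred k * (y - z) ^ 2 <= INR k * (y - z) ^ 2).
    { apply Rmult_le_compat_r; [lra|]. rewrite <- (Rmult_1_r (INR k)) at 2.
      apply Rmult_le_compat_l; lra. }
    assert (y * pow_remainder k y z <= pow_remainder k y z) by nra.
    assert (INR k ^ 2 * (y - z) ^ 2 + INR k * (y - z) ^ 2 <= (INR k + 1) ^ 2 * (y - z) ^ 2) by nra.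
    lra.
Qed.

Lemma pow_remainder_1_pos (k : nat) (x : R) : (2 <= k)%nat -> 0 < x < 1 ->
  0 < pow_remainder k 1 x.
Proof.
  intros Hk Hx. destruct k as [|k]; [lia|]. rewrite pow_remainder_S.
  pose proof (pow_remainder_nonneg k 1 x ltac:(lra) ltac:(lra)).
  assert (0 < INR k) by (apply lt_0_INR; lia).
  assert (0 < x ^ pred k) by (apply pow_lt; lra).
  assert (0 < (1 - x) ^ 2) by (apply pow_lt; lra).
  assert (0 < INR k * x ^ pred k * (1 - x) ^ 2) by (repeat apply Rmult_lt_0_compat; lra).
  lra.
Qed.

Lemma gf_sub_tangent (c : nat -> R) (K : nat) (y z : R) :
  gf c K y - gf c K z - gf_der c K z * (y - z) =
  sum_f_R0 (fun k => c k * pow_remainder k y z) K.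
Proof.
  unfold gf, gf_der, pow_remainder; induction K as [|K IH].
  - simpl. ring.
  - rewrite !tech5, <- IH. ring.
Qed.

Lemma gf_one (c : nat -> R) (K : nat) : gf c K 1 = sum_f_R0 c K.
Proof. apply sum_eq. intros; rewrite pow1; ring. Qed.

Section NonnegCoefficients.

Variables (c : nat -> R) (K : nat).
Hypothesis c_nonneg : forall k, 0 <= c k.

Lemma gf_nonneg (y : R) : 0 <= y -> 0 <= gf c K y.
Proof. intros Hy. apply cond_pos_sum. intros k. apply Rmult_le_pos; [apply c_nonneg|apply pow_le, Hy]. Qed.

Lemma gf_der_nonneg (y : R) : 0 <= y -> 0 <= gf_der c K y.
Proof.
  intros Hy. apply cond_pos_sum. intros k.
  apply Rmult_le_pos; [apply c_nonneg|apply Rmult_le_pos; [apply pos_INR|apply pow_le, Hy]].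
Qed.

Lemma gf_tangent_le (y z : R) : 0 <= y -> 0 <= z ->
  gf c K z + gf_der c K z * (y - z) <= gf c K y.
Proof.
  intros Hy Hz.
  assert (0 <= sum_f_R0 (fun k => c k * pow_remainder k y z) K).
  { apply cond_pos_sum. intros k. apply Rmult_le_pos; [apply c_nonneg|apply pow_remainder_nonneg; lra]. }
  rewrite <- gf_sub_tangent in H. lra.
Qed.

Lemma gf_taylor : exists M, 0 <= M /\ forall y z, 0 <= y <= 1 -> 0 <= z <= 1 ->
  Rabs (gf c K y - gf c K z - gf_der c K z * (y - z)) <= M * (y - z) ^ 2.
Proof.
  exists (sum_f_R0 (fun k => c k * INR k ^ 2) K). split.
  { apply cond_pos_sum. intros k. apply Rmult_le_pos; [apply c_nonneg|apply pow2_ge_0]. }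
  intros y z Hy Hz. rewrite gf_sub_tangent, Rmult_comm, scal_sum.
  rewrite Rabs_right.
  2:{ apply Rle_ge, cond_pos_sum. intros k. apply Rmult_le_pos; [apply c_nonneg|apply pow_remainder_nonneg; lra]. }
  apply sum_Rle. intros k _. replace (c k * INR k ^ 2 * (y - z) ^ 2) with (c k * (INR k ^ 2 * (y - z) ^ 2)) by ring.
  apply Rmult_le_compat_l; [apply c_nonneg|apply pow_remainder_le; lra].
Qed.

Lemma gf_lipschitz (y z : R) : 0 <= y <= 1 -> 0 <= z <= 1 ->
  Rabs (gf c K y - gf c K z) <= gf_der c K 1 * Rabs (y - z).
Proof.
  intros Hy Hz.
  replace (gf c K y - gf c K z) with (sum_f_R0 (fun k => c k * (y ^ k - z ^ k)) K)
    by (unfold gf; rewrite <- minus_sum; apply sum_eq; intros; ring).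
  eapply Rle_trans; [apply Rsum_abs|]. unfold gf_der. rewrite Rmult_comm, scal_sum.
  apply sum_Rle. intros k _. rewrite pow1, Rabs_mult, (Rabs_right (c k)) by (apply Rle_ge, c_nonneg).
  replace (c k * (INR k * 1) * Rabs (y - z)) with (c k * (INR k * Rabs (y - z))) by ring.
  apply Rmult_le_compat_l; [apply c_nonneg|apply pow_sub_abs_le; lra].
Qed.

Lemma gf_der_pos (x : R) : 0 < x <= 1 -> 0 < sum_f_R0 (fun k => INR k * c k) K ->
  0 < gf_der c K x.
Proof.
  intros Hx Hmean.
  apply Rlt_le_trans with (x ^ K * sum_f_R0 (fun k => INR k * c k) K);
    [apply Rmult_lt_0_compat; [apply pow_lt; lra|exact Hmean]|].
  rewrite scal_sum. apply sum_Rle. intros k Hk.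
  replace (INR k * c k * x ^ K) with (c k * (INR k * x ^ K)) by ring.
  apply Rmult_le_compat_l; [apply c_nonneg|]. apply Rmult_le_compat_l; [apply pos_INR|].
  replace K with (pred k + (K - pred k))%nat at 1 by lia. rewrite pow_add.
  pose proof (pow_unit_interval x (K - pred k) ltac:(lra)). pose proof (pow_le x (pred k) ltac:(lra)).
  nra.
Qed.

(* At a fixed point below 1 the chord from [x] to [1] has slope exactly [1/T]; strict convexity
   (some degree [>= 2]) or linearity with total mass 1 makes the tangent slope smaller. *)
Lemma gf_fixed_point_slope (T x : R) : sum_f_R0 c K = 1 -> 0 < T < 1 -> 0 < x < 1 ->
  1 - x = T * (1 - gf c K x) -> T * gf_der c K x < 1.
Proof.
  intros Hsum HT Hx Hfix.
  destruct (classic (exists j, (2 <= j <= K)%nat /\ 0 < c j)) as [[j [Hj Hcj]]|Hlin].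
  - assert (Hconv : gf c K x + gf_der c K x * (1 - x) < gf c K 1).
    { assert (0 < sum_f_R0 (fun k => c k * pow_remainder k 1 x) K).
      { apply (sum_f_R0_pos_of_term _ K j); [|lia|].
        - intros k. apply Rmult_le_pos; [apply c_nonneg|apply pow_remainder_nonneg; lra].
        - apply Rmult_lt_0_compat; [exact Hcj|apply pow_remainder_1_pos; [lia|lra]]. }
      rewrite <- gf_sub_tangent in H. lra. }
    rewrite gf_one, Hsum in Hconv.
    assert (T * (gf_der c K x * (1 - x)) < T * (1 - gf c K x)) by (apply Rmult_lt_compat_l; lra).
    nra.
  - assert (gf_der c K x <= sum_f_R0 c K).
    { apply sum_Rle. intros [|[|k]] Hk; simpl.
      + pose proof (c_nonneg 0%nat). lra.
      + lra.
      + assert (c (S (S k)) = 0).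
        { destruct (Rle_lt_or_eq_dec 0 _ (c_nonneg (S (S k)))) as [Hl|He]; [|auto].
          exfalso; apply Hlin; exists (S (S k)); split; [lia|auto]. }
        rewrite H; lra. }
    nra.
Qed.

End NonnegCoefficients.

Definition Teff (T1 T2 q : R) : R := (1 - q) * T1 + q * T2.

Definition yeff (T1 T2 q u : R) : R := 1 + (u - 1) * Teff T1 T2 q.

Lemma Teff_bounds (T1 T2 q : R) : T2 <= T1 -> 0 <= q <= 1 -> T2 <= Teff T1 T2 q <= T1.
Proof. intros; unfold Teff; split; nra. Qed.

(* Binomial thinning: splitting each of [n] edges into the two types with probabilities
   [1 - q] and [q] turns the two-variable sum into a one-variable one at the averaged point. *)
Lemma gen_sum_gf (D : nat -> R) (K : nat) (T1 T2 q u : R) :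
  (forall k, (K < k)%nat -> D k = 0) ->
  gen_sum D K T1 T2 q u = gf D K (yeff T1 T2 q u).
Proof.
  intros HD. unfold gen_sum, gf.
  set (h := fun k1 k2 => (1 + (u - 1) * T1) ^ k1 * (1 + (u - 1) * T2) ^ k2 * split_dist D q k1 k2).
  change (sum_f_R0 (fun k1 => sum_f_R0 (h k1) K) K = sum_f_R0 (fun k => D k * yeff T1 T2 q u ^ k) K).
  rewrite (sum_eq _ (fun k1 => sum_f_R0 (fun k2 => h k1 k2) (K - k1))).
  2:{ intros i Hi. apply sum_f_R0_trunc; [lia|]. intros j Hj. unfold h, split_dist.
      rewrite HD by lia. ring. }
  rewrite sum_f_R0_antidiagonal. apply sum_eq. intros n Hn.
  replace (yeff T1 T2 q u) with ((1 + (u - 1) * T1) * (1 - q) + (1 + (u - 1) * T2) * q)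
    by (unfold yeff, Teff; ring).
  rewrite binomial, scal_sum. apply sum_eq. intros i Hi.
  unfold h, split_dist. replace (i + (n - i))%nat with n by lia.
  rewrite <- pascal_step1 by lia. rewrite !Rpow_mult_distr. ring.
Qed.

Lemma defect_le_of_small_self_bound (c m d h x' : R) : 0 < c -> 0 <= m <= c / 2 ->
  c * Rabs (d - x' * h) <= m * Rabs d -> c * Rabs (d - x' * h) <= 2 * m * Rabs x' * Rabs h.
Proof.
  intros Hc Hm Hdef.
  assert (Hd : Rabs d <= Rabs x' * Rabs h + Rabs (d - x' * h)).
  { rewrite <- Rabs_mult. replace d with (x' * h + (d - x' * h)) at 1 by ring. apply Rabs_triang. }
  assert (Rabs (d - x' * h) <= Rabs d / 2).
  { apply Rmult_le_reg_l with c; [exact Hc|]. pose proof (Rabs_pos d). nra. }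
  assert (Rabs d <= 2 * Rabs x' * Rabs h) by lra.
  pose proof (Rabs_pos d). nra.
Qed.

Lemma has_deriv_on01_comp (g xs : R -> R) (q0 x' b M : R) :
  (forall q, 0 <= q <= 1 -> 0 <= xs q <= 1) -> 0 <= M ->
  (forall y, 0 <= y <= 1 -> Rabs (g y - g (xs q0) - b * (y - xs q0)) <= M * (y - xs q0) ^ 2) ->
  has_deriv_on01 xs q0 x' -> has_deriv_on01 (fun q => g (xs q)) q0 (b * x').
Proof.
  intros Hxs HM Htaylor Hder eps Heps.
  set (e1 := Rmin 1 (eps / (2 * (Rabs b + 1)))).
  assert (He1 : 0 < e1 /\ e1 <= 1 /\ Rabs b * e1 < eps / 2).
  { pose proof (Rabs_pos b). unfold e1. split; [apply Rmin_glb_lt; [lra|apply Rdiv_lt_0_compat; lra]|].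
    split; [apply Rmin_l|]. apply Rle_lt_trans with (Rabs b * (eps / (2 * (Rabs b + 1)))).
    - apply Rmult_le_compat_l; [lra|apply Rmin_r].
    - apply Rmult_lt_reg_r with (2 * (Rabs b + 1)); [lra|]. field_simplify; nra. }
  destruct He1 as (He1 & He1' & Hbe1).
  destruct (Hder e1 He1) as (delta1 & Hdelta1 & Hd1).
  set (B := M * (Rabs x' + 1) ^ 2).
  assert (HB : 0 <= B) by (apply Rmult_le_pos; [lra|apply pow2_ge_0]).
  exists (Rmin delta1 (eps / (2 * (B + 1)))).
  split; [apply Rmin_glb_lt; [lra|apply Rdiv_lt_0_compat; lra]|].
  intros h Hh Hhd Hqh.
  assert (Hh1 : Rabs h < delta1) by (eapply Rlt_le_trans; [exact Hhd|apply Rmin_l]).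
  assert (Hh2 : B * Rabs h < eps / 2).
  { apply Rle_lt_trans with (B * (eps / (2 * (B + 1)))).
    - apply Rmult_le_compat_l; [lra|]. left; eapply Rlt_le_trans; [exact Hhd|apply Rmin_r].
    - apply Rmult_lt_reg_r with (2 * (B + 1)); [lra|]. field_simplify; nra. }
  specialize (Hd1 h Hh Hh1 Hqh). cbv beta.
  set (r := (xs (q0 + h) - xs q0) / h) in Hd1.
  assert (Hd : xs (q0 + h) - xs q0 = r * h) by (unfold r; field; exact Hh).
  assert (Hr : Rabs r <= Rabs x' + 1).
  { replace r with (x' + (r - x')) by ring. eapply Rle_trans; [apply Rabs_triang|]. lra. }
  specialize (Htaylor (xs (q0 + h)) (Hxs _ Hqh)). rewrite Hd in Htaylor.
  set (E := g (xs (q0 + h)) - g (xs q0) - b * (r * h)) in Htaylor.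
  replace ((g (xs (q0 + h)) - g (xs q0)) / h - b * x') with (b * (r - x') + E / h)
    by (unfold E; field; exact Hh).
  assert (HE : Rabs (E / h) <= B * Rabs h).
  { unfold Rdiv. rewrite Rabs_mult, Rabs_inv.
    apply Rmult_le_reg_r with (Rabs h); [apply Rabs_pos_lt, Hh|].
    rewrite Rmult_assoc, Rinv_l by (apply Rabs_no_R0, Hh).
    replace ((r * h) ^ 2) with (Rabs r ^ 2 * Rabs h ^ 2) in Htaylor
      by (rewrite Rpow_mult_distr, !pow2_abs; ring).
    assert (Rabs r ^ 2 <= (Rabs x' + 1) ^ 2) by (apply pow_incr; split; [apply Rabs_pos|exact Hr]).
    assert (M * (Rabs r ^ 2 * Rabs h ^ 2) <= M * ((Rabs x' + 1) ^ 2 * Rabs h ^ 2)).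
    { apply Rmult_le_compat_l; [lra|]. apply Rmult_le_compat_r; [apply pow2_ge_0|lra]. }
    unfold B. lra. }
  eapply Rle_lt_trans; [apply Rabs_triang|]. rewrite Rabs_mult.
  assert (Rabs b * Rabs (r - x') <= Rabs b * e1) by (apply Rmult_le_compat_l; [apply Rabs_pos|lra]).
  lra.
Qed.

Section FixedPointCurve.

Variables (f xs : R -> R) (T1 T2 q0 a M : R).
Hypotheses (HT2 : 0 <= T2) (HT21 : T2 <= T1) (HT1 : T1 <= 1) (Hq0 : 0 <= q0 <= 1)
  (Hxs : forall q, 0 <= q <= 1 -> 0 <= xs q <= 1)
  (Hfix : forall q, 0 <= q <= 1 -> xs q = 1 - Teff T1 T2 q * (1 - f (xs q)))
  (HM : 0 <= M)
  (Htaylor : forall y, 0 <= y <= 1 -> Rabs (f y - f (xs q0) - a * (y - xs q0)) <= M * (y - xs q0) ^ 2)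
  (Hslope : Teff T1 T2 q0 * a < 1).

Let x0 := xs q0.
Let c := 1 - Teff T1 T2 q0 * a.
Let x' := (T1 - T2) * (1 - f x0) / c.

(* Subtracting the fixed-point equations at [q0] and [q0 + h] leaves the first-order term
   [c * d - (T1 - T2) * (1 - f x0) * h]; what remains is quadratic in [d] and [h]. *)
Lemma fixed_curve_defect (h : R) : 0 <= q0 + h <= 1 ->
  c * Rabs (xs (q0 + h) - x0 - x' * h) <=
  (M * Rabs (xs (q0 + h) - x0) + (Rabs a + M) * Rabs h) * Rabs (xs (q0 + h) - x0).
Proof.
  intros Hqh.
  pose proof (Hxs _ Hqh) as Hy. pose proof (Hxs _ Hq0) as Hx0. fold x0 in Hx0.
  pose proof (Teff_bounds T1 T2 q0 ltac:(lra) Hq0) as HT0.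
  assert (Hc : 0 < c) by (unfold c; lra).
  set (y := xs (q0 + h)) in *. set (d := y - x0). set (T0 := Teff T1 T2 q0) in *.
  set (e := f y - f x0 - a * d).
  assert (He : Rabs e <= M * Rabs d * Rabs d).
  { replace (M * Rabs d * Rabs d) with (M * d ^ 2) by (rewrite <- (pow2_abs d); ring).
    apply Htaylor, Hy. }
  assert (HD : Rabs d <= 1) by (unfold d; apply Rabs_le; lra).
  assert (Hdf : Rabs (f y - f x0) <= (Rabs a + M) * Rabs d).
  { replace (f y - f x0) with (a * d + e) by (unfold e; ring).
    eapply Rle_trans; [apply Rabs_triang|]. rewrite Rabs_mult.
    pose proof (Rabs_pos d).
    assert (M * Rabs d * Rabs d <= M * Rabs d * 1) by (apply Rmult_le_compat_l; [apply Rmult_le_pos|]; lra).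
    lra. }
  assert (Hd_eq : d = T0 * (f y - f x0) + (T1 - T2) * h * (1 - f y)).
  { assert (Ey : y = 1 - Teff T1 T2 (q0 + h) * (1 - f y)) by exact (Hfix _ Hqh).
    assert (E0 : x0 = 1 - T0 * (1 - f x0)) by exact (Hfix _ Hq0).
    unfold d. rewrite Ey at 1. rewrite E0 at 1. unfold T0, Teff. ring. }
  assert (Hid : c * (d - x' * h) = T0 * e - (T1 - T2) * h * (f y - f x0)).
  { unfold x'. replace (c * (d - (T1 - T2) * (1 - f x0) / c * h))
      with (c * d - (T1 - T2) * (1 - f x0) * h) by (field; lra).
    unfold c, e. lra. }
  replace (xs (q0 + h) - x0) with d by reflexivity.
  rewrite <- (Rabs_right c) by lra. rewrite <- Rabs_mult, Hid.
  eapply Rle_trans; [apply Rabs_triang|]. rewrite Rabs_Ropp, !Rabs_mult.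
  rewrite (Rabs_right T0), (Rabs_right (T1 - T2)) by lra.
  pose proof (Rabs_pos e). pose proof (Rabs_pos h). pose proof (Rabs_pos d).
  pose proof (Rabs_pos (f y - f x0)).
  assert (T0 * Rabs e <= 1 * Rabs e) by (apply Rmult_le_compat_r; lra).
  assert ((T1 - T2) * Rabs h * Rabs (f y - f x0) <= 1 * Rabs h * ((Rabs a + M) * Rabs d)).
  { apply Rmult_le_compat; try apply Rmult_le_compat_r; try lra. apply Rmult_le_pos; lra. }
  nra.
Qed.

Lemma fixed_curve_has_deriv :
  (forall eps, 0 < eps -> exists delta, 0 < delta /\
     forall q, 0 <= q <= 1 -> Rabs (q - q0) < delta -> Rabs (xs q - x0) < eps) ->
  has_deriv_on01 xs q0 x'.
Proof.
  intros Hcont eps Heps.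
  pose proof (Teff_bounds T1 T2 q0 HT21 Hq0).
  assert (Hc : 0 < c) by (unfold c; lra).
  set (L := Rabs a + M). assert (HL : 0 <= L) by (unfold L; pose proof (Rabs_pos a); lra).
  set (C := M + L + 1). pose proof (Rabs_pos x') as Hx'.
  set (eta := Rmin (c / (2 * C)) (eps * c / (2 * C * (Rabs x' + 1)))).
  assert (Heta : 0 < eta).
  { apply Rmin_glb_lt; apply Rdiv_lt_0_compat; unfold C; nra. }
  assert (Hm : 0 <= (M + L) * eta <= c / 2).
  { split; [apply Rmult_le_pos; lra|].
    apply Rle_trans with ((M + L) * (c / (2 * C))).
    - apply Rmult_le_compat_l; [lra|apply Rmin_l].
    - unfold C. apply Rmult_le_reg_r with (2 * (M + L + 1)); [lra|]. field_simplify; nra. }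
  destruct (Hcont eta Heta) as (delta & Hdelta & Hnear).
  exists (Rmin delta eta). split; [apply Rmin_glb_lt; lra|].
  intros h Hh Hhd Hqh.
  assert (Hh_eta : Rabs h < eta) by (eapply Rlt_le_trans; [exact Hhd|apply Rmin_r]).
  assert (Hd_eta : Rabs (xs (q0 + h) - x0) < eta).
  { apply Hnear; [exact Hqh|]. replace (q0 + h - q0) with h by ring.
    eapply Rlt_le_trans; [exact Hhd|apply Rmin_l]. }
  set (d := xs (q0 + h) - x0) in *.
  assert (Hdef : c * Rabs (d - x' * h) <= 2 * ((M + L) * eta) * Rabs x' * Rabs h).
  { apply defect_le_of_small_self_bound; [exact Hc|exact Hm|].
    eapply Rle_trans; [apply fixed_curve_defect, Hqh|]. fold x0 d L.
    apply Rmult_le_compat_r; [apply Rabs_pos|].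
    pose proof (Rabs_pos d). pose proof (Rabs_pos h). nra. }
  assert (Hpos : 0 < Rabs h) by (apply Rabs_pos_lt, Hh).
  replace ((xs (q0 + h) - xs q0) / h - x') with ((d - x' * h) / h) by (unfold d, x0; field; exact Hh).
  unfold Rdiv. rewrite Rabs_mult, Rabs_inv.
  apply Rmult_lt_reg_l with (c * Rabs h); [nra|].
  replace (c * Rabs h * (Rabs (d - x' * h) * / Rabs h)) with (c * Rabs (d - x' * h)) by (field; lra).
  eapply Rle_lt_trans; [exact Hdef|].
  assert (Heta' : eta * (2 * C * (Rabs x' + 1)) <= eps * c).
  { apply Rle_trans with (eps * c / (2 * C * (Rabs x' + 1)) * (2 * C * (Rabs x' + 1))).
    - apply Rmult_le_compat_r; [unfold C; nra|apply Rmin_r].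
    - right. field. unfold C; nra. }
  assert (2 * (M + L) * eta * Rabs x' < eta * (2 * C * (Rabs x' + 1))) by (unfold C; nra).
  nra.
Qed.

End FixedPointCurve.

Section Outbreak.

Variables (P : nat -> R) (kmax : nat) (T1 T2 : R).
Hypotheses (HPnn : forall k, 0 <= P k) (HPsupp : forall k, (kmax < k)%nat -> P k = 0)
  (Hmean : 0 < mean_deg P kmax)
  (HT2 : 0 < T2) (HT21 : T2 < T1) (HT1 : T1 < 1).

Lemma Qex_nonneg (k : nat) : 0 <= Qex P kmax k.
Proof.
  unfold Qex. apply Rmult_le_pos; [apply Rmult_le_pos; [apply pos_INR|apply HPnn]|].
  left; apply Rinv_0_lt_compat, Hmean.
Qed.

Lemma Qex_sum : sum_f_R0 (Qex P kmax) kmax = 1.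
Proof.
  unfold Qex, Rdiv. rewrite <- (Rinv_r (mean_deg P kmax)) by lra.
  rewrite <- scal_sum, Rmult_comm. f_equal.
  assert (E : sum_f_R0 (fun k => INR k * P k) (S kmax) = mean_deg P kmax)
    by (rewrite tech5, (HPsupp (S kmax)) by lia; unfold mean_deg; ring).
  rewrite <- E, (decomp_sum _ (S kmax)) by lia. change (INR 0) with 0. cbn [pred]. ring.
Qed.

Lemma Fq_gf (q u : R) : Fq P kmax T1 T2 q u = gf (Qex P kmax) kmax (yeff T1 T2 q u).
Proof.
  apply gen_sum_gf. intros k Hk. unfold Qex. rewrite HPsupp by lia. unfold Rdiv; ring.
Qed.

Lemma yeff_bounds (q u : R) : 0 <= q <= 1 -> 0 <= u <= 1 -> 0 < yeff T1 T2 q u <= 1.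
Proof. intros Hq Hu. pose proof (Teff_bounds T1 T2 q ltac:(lra) Hq). unfold yeff. split; nra. Qed.

Lemma Fq_one (q : R) : Fq P kmax T1 T2 q 1 = 1.
Proof.
  rewrite Fq_gf. unfold yeff. rewrite Rminus_diag, Rmult_0_l, Rplus_0_r.
  rewrite gf_one. exact Qex_sum.
Qed.

Lemma Fq_slope_lt1 (q z : R) : 0 <= q <= 1 -> 0 <= z < 1 -> Fq P kmax T1 T2 q z = z ->
  Teff T1 T2 q * gf_der (Qex P kmax) kmax (yeff T1 T2 q z) < 1.
Proof.
  intros Hq Hz Hfix. rewrite Fq_gf in Hfix. pose proof (Teff_bounds T1 T2 q ltac:(lra) Hq).
  apply gf_fixed_point_slope; [exact Qex_nonneg|exact Qex_sum|lra| |].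
  - unfold yeff. split; nra.
  - rewrite Hfix. unfold yeff. ring.
Qed.

Lemma Fq_sub_id_tangent_le (q z v : R) : 0 <= q <= 1 -> 0 <= z <= 1 -> 0 <= v <= 1 ->
  (Fq P kmax T1 T2 q z - z) -
    (1 - Teff T1 T2 q * gf_der (Qex P kmax) kmax (yeff T1 T2 q z)) * (v - z)
  <= Fq P kmax T1 T2 q v - v.
Proof.
  intros Hq Hz Hv. rewrite !Fq_gf.
  pose proof (yeff_bounds q z Hq Hz). pose proof (yeff_bounds q v Hq Hv).
  pose proof (gf_tangent_le _ kmax Qex_nonneg (yeff T1 T2 q v) (yeff T1 T2 q z) ltac:(lra) ltac:(lra)).
  replace (yeff T1 T2 q v - yeff T1 T2 q z) with (Teff T1 T2 q * (v - z)) in H1 by (unfold yeff; ring).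
  lra.
Qed.

Lemma Fq_sub_id_taylor : exists M, 0 <= M /\ forall q z v, 0 <= q <= 1 -> 0 <= z <= 1 -> 0 <= v <= 1 ->
  Fq P kmax T1 T2 q v - v <= (Fq P kmax T1 T2 q z - z) -
    (1 - Teff T1 T2 q * gf_der (Qex P kmax) kmax (yeff T1 T2 q z)) * (v - z) + M * (v - z) ^ 2.
Proof.
  destruct (gf_taylor _ kmax Qex_nonneg) as (M & HM & Htaylor).
  exists M. split; [exact HM|]. intros q z v Hq Hz Hv. rewrite !Fq_gf.
  pose proof (yeff_bounds q z Hq Hz). pose proof (yeff_bounds q v Hq Hv).
  pose proof (Teff_bounds T1 T2 q ltac:(lra) Hq).
  specialize (Htaylor (yeff T1 T2 q v) (yeff T1 T2 q z) ltac:(lra) ltac:(lra)).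
  replace (yeff T1 T2 q v - yeff T1 T2 q z) with (Teff T1 T2 q * (v - z)) in Htaylor by (unfold yeff; ring).
  apply (Rle_trans _ _ _ (Rle_abs _)) in Htaylor.
  assert (M * (Teff T1 T2 q * (v - z)) ^ 2 <= M * (v - z) ^ 2).
  { apply Rmult_le_compat_l; [exact HM|]. rewrite Rpow_mult_distr.
    pose proof (pow2_ge_0 (v - z)). assert (Teff T1 T2 q ^ 2 <= 1) by nra. nra. }
  lra.
Qed.

Lemma smallest_fp_of_fixed (q z : R) : 0 <= q <= 1 -> 0 <= z < 1 -> Fq P kmax T1 T2 q z = z ->
  smallest_fp P kmax T1 T2 q z.
Proof.
  intros Hq Hz Hfix. pose proof (Fq_slope_lt1 q z Hq Hz Hfix).
  split; [lra|]. split; [auto|]. intros v Hv Hfv.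
  pose proof (Fq_sub_id_tangent_le q z v Hq ltac:(lra) Hv). nra.
Qed.

Lemma smallest_fp_exists (q : R) : 0 <= q <= 1 -> exists u, smallest_fp P kmax T1 T2 q u.
Proof.
  intros Hq.
  destruct (classic (exists z, 0 <= z < 1 /\ Fq P kmax T1 T2 q z = z)) as [[z [Hz Hfix]]|Hnone].
  - exists z. apply smallest_fp_of_fixed; auto.
  - exists 1. split; [lra|]. split; [symmetry; apply Fq_one|].
    intros v Hv Hfv. destruct (Rle_lt_dec 1 v); [auto|].
    exfalso; apply Hnone; exists v; split; [lra|auto].
Qed.

Lemma ustar_smallest_fp (q : R) : 0 <= q <= 1 -> smallest_fp P kmax T1 T2 q (ustar P kmax T1 T2 q).
Proof.
  intros Hq. unfold ustar. apply epsilon_spec, smallest_fp_exists, Hq.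
Qed.

Lemma Fq_lipschitz_q (q q' v : R) : 0 <= q <= 1 -> 0 <= q' <= 1 -> 0 <= v <= 1 ->
  Rabs (Fq P kmax T1 T2 q v - Fq P kmax T1 T2 q' v) <= gf_der (Qex P kmax) kmax 1 * Rabs (q - q').
Proof.
  intros Hq Hq' Hv. rewrite !Fq_gf.
  pose proof (yeff_bounds q v Hq Hv). pose proof (yeff_bounds q' v Hq' Hv).
  eapply Rle_trans; [apply gf_lipschitz; [exact Qex_nonneg|lra|lra]|].
  apply Rmult_le_compat_l; [apply gf_der_nonneg; [exact Qex_nonneg|lra]|].
  replace (yeff T1 T2 q v - yeff T1 T2 q' v) with ((1 - v) * (T1 - T2) * (q - q'))
    by (unfold yeff, Teff; ring).
  rewrite !Rabs_mult, (Rabs_right (1 - v)), (Rabs_right (T1 - T2)) by lra.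
  pose proof (Rabs_pos (q - q')).
  assert ((1 - v) * (T1 - T2) <= 1) by nra. nra.
Qed.

Lemma Fq_uniformly_close (q0 r : R) : 0 <= q0 <= 1 -> 0 < r ->
  exists delta, 0 < delta /\ forall q, 0 <= q <= 1 -> Rabs (q - q0) < delta ->
    forall v, 0 <= v <= 1 -> Rabs (Fq P kmax T1 T2 q v - Fq P kmax T1 T2 q0 v) < r.
Proof.
  intros Hq0 Hr. set (L := gf_der (Qex P kmax) kmax 1 + 1).
  assert (HL : 0 < L) by (pose proof (gf_der_nonneg _ kmax Qex_nonneg 1 ltac:(lra)); unfold L; lra).
  exists (r / L). split; [apply Rdiv_lt_0_compat; lra|]. intros q Hq Hqd v Hv.
  eapply Rle_lt_trans; [apply Fq_lipschitz_q; auto|].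
  apply Rle_lt_trans with (L * Rabs (q - q0)).
  - apply Rmult_le_compat_r; [apply Rabs_pos|unfold L; lra].
  - apply Rmult_lt_compat_l with (r := L) in Hqd; [|exact HL].
    replace (L * (r / L)) with r in Hqd by (field; lra). exact Hqd.
Qed.

Lemma Fq_continuous (q : R) : continuity (Fq P kmax T1 T2 q).
Proof.
  replace (Fq P kmax T1 T2 q) with (comp (gf (Qex P kmax) kmax) (yeff T1 T2 q))
    by (apply functional_extensionality; intros u; symmetry; apply Fq_gf).
  apply continuity_comp; [unfold yeff, Teff; reg|apply continuity_finite_sum].
Qed.

Lemma Fq_fixed_point_below (q w : R) : 0 <= q <= 1 -> 0 <= w <= 1 ->
  Fq P kmax T1 T2 q w < w -> exists z, 0 <= z < w /\ Fq P kmax T1 T2 q z = z.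
Proof.
  intros Hq Hw Hlt. set (phi := fun v => v - Fq P kmax T1 T2 q v).
  assert (Hphi0 : phi 0 <= 0).
  { unfold phi. rewrite Fq_gf. pose proof (yeff_bounds q 0 Hq ltac:(lra)).
    pose proof (gf_nonneg _ kmax Qex_nonneg (yeff T1 T2 q 0) ltac:(lra)). lra. }
  assert (Hphiw : 0 < phi w) by (unfold phi; lra).
  destruct (IVT_cor phi 0 w) as (z & Hzr & Hz).
  - apply continuity_minus; [apply derivable_continuous, derivable_id|apply Fq_continuous].
  - lra.
  - nra.
  - exists z. unfold phi in Hz. split; [|lra].
    split; [lra|]. destruct (Req_dec z w) as [->|]; [unfold phi in Hphiw; lra|lra].
Qed.

(* Near a transversal fixed point [u0 < 1], [F_q v - v] is [>= c e] on [[0, u0 - e]] and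
   [<= - c e / 2] at [u0 + e]; moving [q] perturbs [F_q] uniformly by less than [c e / 4]. *)
Lemma ustar_continuous (q0 : R) : 0 <= q0 <= 1 -> ustar P kmax T1 T2 q0 < 1 ->
  forall eps, 0 < eps -> exists delta, 0 < delta /\ forall q, 0 <= q <= 1 -> Rabs (q - q0) < delta ->
    Rabs (ustar P kmax T1 T2 q - ustar P kmax T1 T2 q0) < eps.
Proof.
  intros Hq0 Hu1 eps Heps.
  destruct (ustar_smallest_fp q0 Hq0) as (Hu0 & Hfix0 & _).
  set (u0 := ustar P kmax T1 T2 q0) in *.
  pose proof (Fq_slope_lt1 q0 u0 Hq0 ltac:(lra) (eq_sym Hfix0)) as Hslope.
  set (c := 1 - Teff T1 T2 q0 * gf_der (Qex P kmax) kmax (yeff T1 T2 q0 u0)).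
  assert (Hc : 0 < c) by (unfold c; lra).
  destruct Fq_sub_id_taylor as (M & HM & Htaylor).
  set (e := Rmin eps (Rmin (1 - u0) (c / (2 * (M + 1))))).
  assert (He : 0 < e /\ e <= eps /\ e <= 1 - u0 /\ M * e <= c / 2).
  { unfold e. repeat split.
    - repeat apply Rmin_glb_lt; [lra|lra|apply Rdiv_lt_0_compat; lra].
    - apply Rmin_l.
    - eapply Rle_trans; [apply Rmin_r|apply Rmin_l].
    - apply Rle_trans with (M * (c / (2 * (M + 1)))).
      + apply Rmult_le_compat_l; [lra|]. eapply Rle_trans; apply Rmin_r.
      + apply Rmult_le_reg_r with (2 * (M + 1)); [lra|]. field_simplify; nra. }
  destruct He as (He & He_eps & He_u0 & HMe).
  assert (Hup0 : Fq P kmax T1 T2 q0 (u0 + e) - (u0 + e) <= - c * e / 2).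
  { specialize (Htaylor q0 u0 (u0 + e) Hq0 Hu0 ltac:(lra)). fold c in Htaylor.
    rewrite <- Hfix0 in Htaylor. nra. }
  assert (Hlow0 : forall v, 0 <= v <= u0 - e -> c * e <= Fq P kmax T1 T2 q0 v - v).
  { intros v Hv. pose proof (Fq_sub_id_tangent_le q0 u0 v Hq0 Hu0 ltac:(lra)) as Ht.
    fold c in Ht. rewrite <- Hfix0 in Ht. nra. }
  destruct (Fq_uniformly_close q0 (c * e / 4) Hq0 ltac:(nra)) as (delta & Hdelta & Hclose).
  exists delta. split; [exact Hdelta|]. intros q Hq Hqd. specialize (Hclose q Hq Hqd).
  destruct (ustar_smallest_fp q Hq) as (Hu & Hfix & Hmin).
  destruct (Fq_fixed_point_below q (u0 + e) Hq ltac:(lra)) as (z & Hz & Hfz).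
  { pose proof (Hclose (u0 + e) ltac:(lra)) as Hcl. apply Rabs_def2 in Hcl. nra. }
  assert (Hle : ustar P kmax T1 T2 q <= z) by (apply Hmin; [lra|auto]).
  assert (Hgt : u0 - e < ustar P kmax T1 T2 q).
  { destruct (Rle_lt_dec (ustar P kmax T1 T2 q) (u0 - e)) as [Hbad|]; [exfalso|auto].
    pose proof (Hlow0 _ (conj (proj1 Hu) Hbad)). pose proof (Hclose _ Hu) as Hcl.
    apply Rabs_def2 in Hcl. rewrite <- Hfix in Hcl. lra. }
  apply Rabs_def1; lra.
Qed.

Definition xstar (q : R) : R := yeff T1 T2 q (ustar P kmax T1 T2 q).

Lemma xstar_bounds (q : R) : 0 <= q <= 1 -> 0 < xstar q <= 1.
Proof. intros Hq. apply yeff_bounds; [exact Hq|apply (ustar_smallest_fp q Hq)]. Qed.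

Lemma xstar_fixed (q : R) : 0 <= q <= 1 ->
  xstar q = 1 - Teff T1 T2 q * (1 - gf (Qex P kmax) kmax (xstar q)).
Proof.
  intros Hq. destruct (ustar_smallest_fp q Hq) as (_ & Hfix & _).
  unfold xstar. rewrite <- Fq_gf, <- Hfix. unfold yeff. ring.
Qed.

Lemma xstar_continuous (q0 : R) : 0 <= q0 <= 1 -> ustar P kmax T1 T2 q0 < 1 ->
  forall eps, 0 < eps -> exists delta, 0 < delta /\ forall q, 0 <= q <= 1 -> Rabs (q - q0) < delta ->
    Rabs (xstar q - xstar q0) < eps.
Proof.
  intros Hq0 Hu1 eps Heps.
  destruct (ustar_continuous q0 Hq0 Hu1 (eps / 2) ltac:(lra)) as (delta & Hdelta & Hnear).
  exists (Rmin delta (eps / 2)). split; [apply Rmin_glb_lt; lra|].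
  intros q Hq Hqd.
  assert (Hq_near : Rabs (q - q0) < delta) by (eapply Rlt_le_trans; [exact Hqd|apply Rmin_l]).
  assert (Hq_eps : Rabs (q - q0) < eps / 2) by (eapply Rlt_le_trans; [exact Hqd|apply Rmin_r]).
  specialize (Hnear q Hq Hq_near).
  destruct (ustar_smallest_fp q0 Hq0) as (Hu0 & _).
  pose proof (Teff_bounds T1 T2 q ltac:(lra) Hq).
  unfold xstar, yeff.
  set (u := ustar P kmax T1 T2 q) in *. set (u0 := ustar P kmax T1 T2 q0) in *.
  replace ((1 + (u - 1) * Teff T1 T2 q) - (1 + (u0 - 1) * Teff T1 T2 q0))
    with (Teff T1 T2 q * (u - u0) + (1 - u0) * (T1 - T2) * (q - q0)) by (unfold Teff; ring).
  eapply Rle_lt_trans; [apply Rabs_triang|]. rewrite !Rabs_mult.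
  rewrite (Rabs_right (Teff T1 T2 q)), (Rabs_right (1 - u0)), (Rabs_right (T1 - T2)) by lra.
  pose proof (Rabs_pos (u - u0)). pose proof (Rabs_pos (q - q0)).
  assert (Teff T1 T2 q * Rabs (u - u0) <= Rabs (u - u0)) by nra.
  assert ((1 - u0) * (T1 - T2) * Rabs (q - q0) <= Rabs (q - q0)).
  { assert ((1 - u0) * (T1 - T2) <= 1) by nra. nra. }
  lra.
Qed.

Lemma psi_gf (q : R) : psi P kmax T1 T2 q = gf P kmax (xstar q).
Proof. apply gen_sum_gf, HPsupp. Qed.

Lemma psi_has_deriv (q0 : R) : 0 <= q0 <= 1 -> ustar P kmax T1 T2 q0 < 1 ->
  has_deriv_on01 (psi P kmax T1 T2) q0
    (gf_der P kmax (xstar q0) * ((T1 - T2) * (1 - ustar P kmax T1 T2 q0) /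
      (1 - Teff T1 T2 q0 * gf_der (Qex P kmax) kmax (xstar q0)))).
Proof.
  intros Hq0 Hu1.
  replace (psi P kmax T1 T2) with (fun q => gf P kmax (xstar q))
    by (apply functional_extensionality; intros q; symmetry; apply psi_gf).
  assert (Hxs : forall q, 0 <= q <= 1 -> 0 <= xstar q <= 1)
    by (intros q Hq; pose proof (xstar_bounds q Hq); lra).
  destruct (gf_taylor P kmax HPnn) as (MP & HMP & HtaylorP).
  destruct (gf_taylor (Qex P kmax) kmax Qex_nonneg) as (MQ & HMQ & HtaylorQ).
  apply has_deriv_on01_comp with (M := MP); [exact Hxs|exact HMP| |].
  { intros y Hy. apply HtaylorP; [exact Hy|apply Hxs, Hq0]. }
  destruct (ustar_smallest_fp q0 Hq0) as (Hu0 & Hfix0 & _).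
  replace (1 - ustar P kmax T1 T2 q0) with (1 - gf (Qex P kmax) kmax (xstar q0))
    by (unfold xstar; rewrite <- Fq_gf, <- Hfix0; reflexivity).
  apply fixed_curve_has_deriv with (M := MQ); try lra.
  - exact Hxs.
  - exact xstar_fixed.
  - intros y Hy. apply HtaylorQ; [exact Hy|apply Hxs, Hq0].
  - apply Fq_slope_lt1; [exact Hq0|lra|auto].
  - apply xstar_continuous; assumption.
Qed.

Lemma psi_deriv_pos (q0 : R) : 0 <= q0 <= 1 -> ustar P kmax T1 T2 q0 < 1 ->
  0 < gf_der P kmax (xstar q0) * ((T1 - T2) * (1 - ustar P kmax T1 T2 q0) /
      (1 - Teff T1 T2 q0 * gf_der (Qex P kmax) kmax (xstar q0))).
Proof.
  intros Hq0 Hu1. destruct (ustar_smallest_fp q0 Hq0) as (Hu0 & Hfix0 & _).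
  pose proof (Fq_slope_lt1 q0 (ustar P kmax T1 T2 q0) Hq0 ltac:(lra) (eq_sym Hfix0)) as Hslope.
  apply Rmult_lt_0_compat.
  - apply gf_der_pos; [exact HPnn|apply xstar_bounds, Hq0|exact Hmean].
  - apply Rdiv_lt_0_compat; [apply Rmult_lt_0_compat; lra|unfold xstar; lra].
Qed.

Hypothesis HPsum : sum_f_R0 P kmax = 1.

Lemma ustar_lt_1 (q : R) : 0 <= q <= 1 -> psi P kmax T1 T2 q < 1 -> ustar P kmax T1 T2 q < 1.
Proof.
  intros Hq Hpsi. destruct (ustar_smallest_fp q Hq) as ((_ & Hu) & _).
  destruct (Rle_lt_or_eq_dec _ _ Hu) as [|Heq]; [assumption|exfalso].
  rewrite psi_gf in Hpsi. unfold xstar, yeff in Hpsi.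
  rewrite Heq, Rminus_diag, Rmult_0_l, Rplus_0_r, gf_one, HPsum in Hpsi. lra.
Qed.

End Outbreak.

Theorem lemma3 (P : nat -> R) (kmax : nat) (T1 T2 : R)
  (HPnn : forall k, 0 <= P k)
  (HPsupp : forall k, (kmax < k)%nat -> P k = 0)
  (HPsum : sum_f_R0 P kmax = 1)
  (Hmean : 0 < mean_deg P kmax)
  (HT2 : 0 < T2) (HT21 : T2 < T1) (HT1 : T1 < 1) :
  forall q, 0 <= q <= 1 ->
    0 < psi P kmax T1 T2 q < 1 ->
    exists l, has_deriv_on01 (psi P kmax T1 T2) q l /\ 0 < l.
Proof.
  intros q Hq Hpsi.
  assert (Hu1 : ustar P kmax T1 T2 q < 1) by (eapply ustar_lt_1; eauto; apply Hpsi).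
  eexists; split; [eapply psi_has_deriv|eapply psi_deriv_pos]; eauto.
Qed.
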